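(* For all $i < j$ in $\mathbb{N}$, the transposition $(i\ j)$ lies in the bi-immune symmetric group $G_{\mathfrak{B}}$.
   Context: $\mathbb{N}$ denotes the non-negative integers, and $\mathrm{Sym}(\mathbb{N})$ the group of all permutations of $\mathbb{N}$ under composition ($g \circ f$ means apply $f$ first). For $i \in \mathbb{N}$, $\sigma_{(i)}$ is the permutation swapping $i$ and $i+1$ and fixing all other numbers. For $A \subseteq \mathbb{N}$ with increasing enumeration $a_0 < a_1 < \cdots$, define $\sigma_A(x) = \lim_{n \to \infty} (\sigma_{(a_0)} \circ \sigma_{(a_1)} \circ \cdots \circ \sigma_{(a_n)})(x)$ (eventually constant for each $x$). A set $A$ is immune if it is infinite and contains no infinite computably enumerable subset; $A$ is bi-immune if both $A$ and $\mathbb{N} - A$ are immune. For bi-immune $A$, $\sigma_A$ is a permutation of $\mathbb{N}$. The bi-immune symmetric group $G_{\mathfrak{B}}$ is the subgroup of $\mathrm{Sym}(\mathbb{N})$ generated by $\{\sigma_A : A \text{ bi-immune}\}$. *)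

From Stdlib Require Import Arith List Lia.
Import ListNotations.

Inductive prf : Type :=
| PZero : prf
| PSucc : prf
| PProj : nat -> prf
| PComp : prf -> list prf -> prf
| PPrimRec : prf -> prf -> prf
| PMu : prf -> prf.

Inductive peval : prf -> list nat -> nat -> Prop :=
| ev_zero v : peval PZero v 0
| ev_succ x v : peval PSucc (x :: v) (S x)
| ev_proj i v : i < length v -> peval (PProj i) v (nth i v 0)
| ev_comp f gs v ys z :
    Forall2 (fun g y => peval g v y) gs ys -> peval f ys z -> peval (PComp f gs) v z
| ev_rec0 f g v y : peval f v y -> peval (PPrimRec f g) (0 :: v) y
| ev_recS f g n v y z :
    peval (PPrimRec f g) (n :: v) y -> peval g (n :: y :: v) z ->
    peval (PPrimRec f g) (S n :: v) z
| ev_mu f v n :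
    peval f (n :: v) 0 ->
    (forall m, m < n -> exists k, peval f (m :: v) (S k)) ->
    peval (PMu f) v n.

Definition ce (B : nat -> Prop) : Prop :=
  exists f : prf, forall x, B x <-> exists y, peval f [x] y.

Definition infinite_set (A : nat -> Prop) : Prop :=
  forall n, exists m, n <= m /\ A m.

Definition immune (A : nat -> Prop) : Prop :=
  infinite_set A /\
  ~ (exists B : nat -> Prop, (forall x, B x -> A x) /\ infinite_set B /\ ce B).

Definition bi_immune (A : nat -> Prop) : Prop :=
  immune A /\ immune (fun x => ~ A x).

Definition adj_swap (i x : nat) : nat :=
  if x =? i then S i else if x =? S i then i else x.

Definition transp (i j x : nat) : nat :=
  if x =? i then j else if x =? j then i else x.

Definition increasing_enum (A : nat -> Prop) (a : nat -> nat) : Prop :=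
  (forall n, a n < a (S n)) /\ (forall x, A x <-> exists n, a n = x).

Fixpoint prefix_comp (a : nat -> nat) (n x : nat) : nat :=
  match n with
  | 0 => adj_swap (a 0) x
  | S m => prefix_comp a m (adj_swap (a (S m)) x)
  end.

Definition is_sigma (A : nat -> Prop) (f : nat -> nat) : Prop :=
  exists a, increasing_enum A a /\
    forall x, exists N, forall n, N <= n -> prefix_comp a n x = f x.

Definition bi_immune_gen (f : nat -> nat) : Prop :=
  exists A, bi_immune A /\ is_sigma A f.

(** Subgroup of Sym(N) generated by a set S of permutations
    (permutations represented as functions, up to pointwise equality). *)
Inductive in_gen (S : (nat -> nat) -> Prop) : (nat -> nat) -> Prop :=
| ig_base f : S f -> in_gen S f
| ig_id : in_gen S (fun x => x)
| ig_comp f g : in_gen S f -> in_gen S g -> in_gen S (fun x => g (f x))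
| ig_inv f g : in_gen S f -> (forall x, f (g x) = x) -> (forall x, g (f x) = x) ->
    in_gen S g
| ig_ext f g : in_gen S f -> (forall x, f x = g x) -> in_gen S g.

Definition G_B (f : nat -> nat) : Prop := in_gen bi_immune_gen f.

(** Since (i m+1) = s_m (i m) s_m with s_m the adjacent swap (m m+1), an
    induction on j reduces the theorem to the adjacent swaps s_i.

    For a set A without two consecutive elements, sigma_A is the product
    [pair_swap A] of the disjoint swaps (a a+1), a in A.  If X is such a set
    with all its elements >= i+2, then sigma_(X + {i}) = sigma_X o s_i, so
    s_i = sigma_X o sigma_(X + {i}) because sigma_X is an involution.  It
    therefore suffices to find such an X with both X and X + {i} bi-immune.

    X is built by diagonalisation against an enumeration (W_e) of all
    computably enumerable sets: stage e picks x_e < y_e - 1 above all earlier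
    choices, both in W_e whenever W_e is infinite, and X = {x_e}.  Every
    infinite c.e. set W_e then meets X (in x_e) and its complement (in y_e);
    the same holds for X + {i} once all choices lie above i+1. *)

From Stdlib Require Import Arith List Lia Classical ClassicalEpsilon.
Import ListNotations.
From mathcomp Require choice.

(** * Programs can be enumerated by the natural numbers *)

(** The countable instance of MathComp's generic trees is found by canonical
    structure inference only under [Import choice]; the import is confined to
    this module. *)
Module TreeCode.
Import choice.
Definition code : GenTree.tree nat -> nat := pickle.
Lemma code_inj (s t : GenTree.tree nat) : code s = code t -> s = t.
Proof. intros H. exact (ssrfun.pcan_inj (@pickleK _) H). Qed.
End TreeCode.

Fixpoint prf_tree (f : prf) : choice.GenTree.tree nat :=
  match f with
  | PZero => choice.GenTree.Node 0 []
  | PSucc => choice.GenTree.Node 1 []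
  | PProj i => choice.GenTree.Node 2 [choice.GenTree.Leaf i]
  | PComp f gs => choice.GenTree.Node 3 (prf_tree f :: map prf_tree gs)
  | PPrimRec f g => choice.GenTree.Node 4 [prf_tree f; prf_tree g]
  | PMu f => choice.GenTree.Node 5 [prf_tree f]
  end.

(** Induction on programs that also covers the argument lists of [PComp]
    (the automatically generated principle does not). *)
Definition prf_nested_ind (P : prf -> Prop)
  (H0 : P PZero) (H1 : P PSucc) (H2 : forall i, P (PProj i))
  (H3 : forall f gs, P f -> Forall P gs -> P (PComp f gs))
  (H4 : forall f g, P f -> P g -> P (PPrimRec f g))
  (H5 : forall f, P f -> P (PMu f)) : forall f, P f :=
  fix F f := match f with
  | PZero => H0 | PSucc => H1 | PProj i => H2 i
  | PComp f gs => H3 f gs (F f)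
      ((fix G l := match l return Forall P l with
                   | [] => Forall_nil _
                   | g :: l' => Forall_cons _ (F g) (G l') end) gs)
  | PPrimRec f g => H4 f g (F f) (F g)
  | PMu f => H5 f (F f) end.

Lemma prf_tree_inj (f g : prf) : prf_tree f = prf_tree g -> f = g.
Proof.
  revert g. induction f as [| |i|f gs IHf IHgs|f g IHf IHg|f IHf] using prf_nested_ind;
    intros [| |i'|f' gs'|f' g'|f'] E; simpl in E;
    try discriminate; inversion E; subst; f_equal; auto.
  match goal with Hl : map prf_tree _ = map prf_tree _ |- _ => revert Hl end.
  clear E. revert gs'. induction IHgs as [|g gs Hg Hgs IH]; intros [|g' gs'] E;
    simpl in E; try discriminate; auto.
  inversion E; f_equal; auto.
Qed.

Lemma enumeration_of_injection (T : Type) (t0 : T) (c : T -> nat) :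
  (forall s t, c s = c t -> s = t) -> exists en : nat -> T, forall t, exists n, en n = t.
Proof.
  intros Hc.
  exists (fun n => match excluded_middle_informative (exists t, c t = n) with
           | left H => proj1_sig (constructive_indefinite_description _ H)
           | right _ => t0 end).
  intros t. exists (c t).
  destruct excluded_middle_informative as [H|H]; [|exfalso; eauto].
  destruct (constructive_indefinite_description _ H) as [s Hs]; simpl; auto.
Qed.

Lemma prf_enumeration : exists en : nat -> prf, forall f, exists n, en n = f.
Proof.
  apply (enumeration_of_injection prf PZero (fun f => TreeCode.code (prf_tree f))).
  intros f g H. apply prf_tree_inj, TreeCode.code_inj, H.
Qed.

(** * Immunity *)

Definition dom (f : prf) (z : nat) : Prop := exists v, peval f [z] v.

Lemma immune_of_escape (A : nat -> Prop) :
  infinite_set A ->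
  (forall f, infinite_set (dom f) -> exists z, dom f z /\ ~ A z) -> immune A.
Proof.
  intros HA Hesc. split; auto.
  intros [B [HBA [HB [f Hf]]]].
  assert (Hinf : infinite_set (dom f)).
  { intros n. destruct (HB n) as [m [Hm Bm]]. exists m. split; auto. apply Hf; auto. }
  destruct (Hesc f Hinf) as [z [Dz Az]]. apply Az, HBA, Hf, Dz.
Qed.

(** * sigma_A for sets without consecutive elements *)

(** Swap each a in A with a+1; for A without consecutive elements this is
    the product of the disjoint swaps (a a+1). *)
Definition pair_swap (A : nat -> Prop) (z : nat) : nat :=
  if excluded_middle_informative (A z) then S z
  else match z with
       | 0 => 0
       | S w => if excluded_middle_informative (A w) then w else z
       end.

Definition sparse (A : nat -> Prop) : Prop := forall z, A z -> ~ A (S z).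

Lemma pair_swap_in (A : nat -> Prop) (z : nat) : A z -> pair_swap A z = S z.
Proof. unfold pair_swap. destruct excluded_middle_informative; tauto. Qed.

Lemma pair_swap_succ (A : nat -> Prop) (w : nat) :
  ~ A (S w) -> A w -> pair_swap A (S w) = w.
Proof.
  unfold pair_swap. intros. do 2 (destruct excluded_middle_informative; try tauto).
Qed.

Lemma pair_swap_out (A : nat -> Prop) (z : nat) :
  ~ A z -> (forall w, z = S w -> ~ A w) -> pair_swap A z = z.
Proof.
  unfold pair_swap. intros Hz Hw. destruct excluded_middle_informative; [tauto|].
  destruct z as [|w]; auto. destruct excluded_middle_informative; auto.
  exfalso. apply (Hw w); auto.
Qed.

Lemma pair_swap_local (A B : nat -> Prop) (z : nat) :
  (A z <-> B z) -> (forall w, z = S w -> (A w <-> B w)) ->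
  pair_swap A z = pair_swap B z.
Proof.
  intros Hz Hw. unfold pair_swap.
  destruct (excluded_middle_informative (A z)), (excluded_middle_informative (B z));
    try tauto.
  destruct z as [|w]; auto. specialize (Hw w eq_refl).
  destruct (excluded_middle_informative (A w)), (excluded_middle_informative (B w));
    tauto.
Qed.

(** For sparse A the swapped pairs are disjoint, hence an involution. *)
Lemma pair_swap_involutive (A : nat -> Prop) (z : nat) :
  sparse A -> pair_swap A (pair_swap A z) = z.
Proof.
  intros HA. destruct (classic (A z)) as [Az|Az].
  - rewrite (pair_swap_in A z Az). apply pair_swap_succ; [apply HA|]; auto.
  - destruct (classic (exists w, z = S w /\ A w)) as [[w [-> Aw]]|Hw].
    + rewrite (pair_swap_succ A w Az Aw). apply pair_swap_in; auto.
    + assert (Hw' : forall w, z = S w -> ~ A w) by eauto.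
      rewrite (pair_swap_out A z) by auto. apply pair_swap_out; auto.
Qed.

Lemma pair_swap_ext (A B : nat -> Prop) (z : nat) :
  (forall w, A w <-> B w) -> pair_swap A z = pair_swap B z.
Proof. intros HAB. apply pair_swap_local; auto. Qed.

Lemma pair_swap_add (A : nat -> Prop) (c z : nat) :
  (forall w, A w -> S w < c \/ S c < w) ->
  pair_swap (fun w => A w \/ w = c) z = pair_swap A (adj_swap c z).
Proof.
  intros Hfar. unfold adj_swap.
  destruct (Nat.eqb_spec z c) as [->|Hzc].
  - rewrite pair_swap_in by auto. symmetry.
    apply pair_swap_out.
    + intros H. specialize (Hfar _ H). lia.
    + intros w [= <-] H. specialize (Hfar _ H). lia.
  - destruct (Nat.eqb_spec z (S c)) as [->|Hzc1].
    + assert (Hnot : ~ (A (S c) \/ S c = c)) by (intros [H|H]; [specialize (Hfar _ H)|]; lia).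
      rewrite (pair_swap_succ _ c Hnot (or_intror eq_refl)). symmetry.
      apply pair_swap_out.
      * intros H. specialize (Hfar _ H). lia.
      * intros w -> H. specialize (Hfar _ H). lia.
    + apply pair_swap_local.
      * split; [intros [H|H]|]; auto; lia.
      * intros w ->. split; [intros [H|H]|]; auto; lia.
Qed.

Lemma adj_swap_pair_swap (c z : nat) : adj_swap c z = pair_swap (fun w => w = c) z.
Proof.
  transitivity (pair_swap (fun w => False \/ w = c) z).
  - rewrite pair_swap_add by tauto. symmetry. apply pair_swap_out; tauto.
  - apply pair_swap_ext. tauto.
Qed.

Definition gapped (a : nat -> nat) : Prop := forall n, S (a n) < a (S n).

Lemma prefix_comp_gapped (a : nat -> nat) (n z : nat) :
  gapped a -> prefix_comp a n z = pair_swap (fun w => exists k, k <= n /\ a k = w) z.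
Proof.
  intros Ha. revert z. induction n as [|n IH]; intros z; simpl.
  - rewrite adj_swap_pair_swap. apply pair_swap_ext. intros w. split.
    + intros ->. eauto.
    + intros [k [Hk <-]]. f_equal. lia.
  - assert (Hfar : forall w, (exists k, k <= n /\ a k = w) -> S w < a (S n) \/ S (a (S n)) < w).
    { intros w [k [Hk <-]]. left.
      assert (Hmono : forall m, k <= m -> a k <= a m).
      { induction 1; [lia|]. specialize (Ha m). lia. }
      specialize (Hmono n Hk). specialize (Ha n). lia. }
    rewrite IH, <- (pair_swap_add _ _ _ Hfar). apply pair_swap_ext. intros w. split.
    + intros [[k [Hk <-]]| ->]; eauto.
    + intros [k [Hk <-]]. destruct (Nat.eq_dec k (S n)) as [->|Hkn]; auto.
      left. exists k. split; auto. lia.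
Qed.

Lemma sigma_gapped (A : nat -> Prop) (a : nat -> nat) :
  gapped a -> (forall z, A z <-> exists n, a n = z) -> is_sigma A (pair_swap A).
Proof.
  intros Ha HA.
  assert (Hge : forall k, k <= a k).
  { induction k; [lia|]. specialize (Ha k). lia. }
  exists a. split; [split; auto; intros n; specialize (Ha n); lia|].
  intros z. exists z. intros n Hn. rewrite prefix_comp_gapped by exact Ha.
  (* a k <= z forces k <= n, so below z the prefix set and A agree *)
  assert (Hagree : forall w, w <= z -> ((exists k, k <= n /\ a k = w) <-> A w)).
  { intros w Hw. rewrite HA. split.
    - intros [k [_ <-]]. eauto.
    - intros [k <-]. exists k. split; auto. specialize (Hge k). lia. }
  apply pair_swap_local; [|intros w ->]; apply Hagree; lia.
Qed.

(** * Diagonalisation against a family of sets *)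

Definition stage_ok (V : nat -> Prop) (b : nat) (p : nat * nat) : Prop :=
  b <= fst p /\ S (fst p) < snd p /\
  (infinite_set V -> V (fst p) /\ V (snd p)).

Lemma stage_exists (V : nat -> Prop) (b : nat) : exists p, stage_ok V b p.
Proof.
  destruct (classic (infinite_set V)) as [Hi|Hi].
  - destruct (Hi b) as [x [Hx Vx]]. destruct (Hi (S (S x))) as [y [Hy Vy]].
    exists (x, y). repeat split; simpl; auto; lia.
  - exists (b, S (S b)). repeat split; simpl; try lia; tauto.
Qed.

Section Diagonal.
Variable W : nat -> nat -> Prop.
Variable N : nat.
Variable pick : nat -> nat -> nat * nat.
Hypothesis pick_ok : forall e b, stage_ok (W e) b (pick e b).

(** Stage [e] works above [bound e], which lies past all earlier choices. *)
Fixpoint bound (e : nat) : nat :=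
  match e with 0 => N | S e => S (snd (pick e (bound e))) end.

Lemma diagonal_from_pick : exists x y : nat -> nat,
  N <= x 0 /\ (forall e, S (x e) < y e) /\ (forall e, y e < x (S e)) /\
  (forall e, infinite_set (W e) -> W e (x e) /\ W e (y e)).
Proof.
  exists (fun e => fst (pick e (bound e))), (fun e => snd (pick e (bound e))).
  split; [|split; [|split]].
  - apply (pick_ok 0 N).
  - intros n. apply (pick_ok n).
  - intros n. apply (pick_ok (S n)).
  - intros n. apply (pick_ok n).
Qed.
End Diagonal.

Lemma diagonal_sequences (W : nat -> nat -> Prop) (N : nat) : exists x y : nat -> nat,
  N <= x 0 /\ (forall e, S (x e) < y e) /\ (forall e, y e < x (S e)) /\
  (forall e, infinite_set (W e) -> W e (x e) /\ W e (y e)).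
Proof.
  destruct (choice (fun eb p => stage_ok (W (fst eb)) (snd eb) p)) as [pick Hpick].
  { intros [e b]. apply stage_exists. }
  apply diagonal_from_pick with (pick := fun e b => pick (e, b)).
  intros e b. apply (Hpick (e, b)).
Qed.

Section Separation.
Variables x y : nat -> nat.
Hypothesis x_lt_y : forall e, S (x e) < y e.
Hypothesis y_lt_x : forall e, y e < x (S e).

Lemma x_gap (e e' : nat) : e < e' -> S (y e) <= x e'.
Proof.
  induction 1; [apply y_lt_x|]. pose proof (x_lt_y m). pose proof (y_lt_x m). lia.
Qed.

(** x grows at least linearly, so {x_e} and {y_e} are infinite. *)
Lemma x_grows (e : nat) : x 0 + e <= x e.
Proof.
  induction e; [lia|]. pose proof (x_lt_y e). pose proof (y_lt_x e). lia.
Qed.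

Lemma y_not_x (e e' : nat) : y e <> x e'.
Proof.
  destruct (lt_eq_lt_dec e e') as [[H|<-]|H].
  - pose proof (x_gap e e' H). lia.
  - pose proof (x_lt_y e). lia.
  - pose proof (x_gap e' e H). pose proof (x_lt_y e). pose proof (x_lt_y e'). lia.
Qed.

Lemma x_sparse : sparse (fun z => exists e, x e = z).
Proof.
  intros z [e <-] [e' He'].
  destruct (lt_eq_lt_dec e e') as [[H|<-]|H].
  - pose proof (x_gap e e' H). pose proof (x_lt_y e). lia.
  - lia.
  - pose proof (x_gap e' e H). pose proof (x_lt_y e'). lia.
Qed.

Lemma bi_immune_separating (en : nat -> prf) (A : nat -> Prop) :
  (forall f, exists e, en e = f) ->
  (forall e, infinite_set (dom (en e)) -> dom (en e) (x e) /\ dom (en e) (y e)) ->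
  (forall e, A (x e)) -> (forall e, ~ A (y e)) -> bi_immune A.
Proof.
  intros Hen Hdom Ax Ay. split; apply immune_of_escape.
  - intros n. exists (x n). pose proof (x_grows n). split; auto; lia.
  - intros f Hf. destruct (Hen f) as [e <-]. exists (y e). split; auto. apply Hdom, Hf.
  - intros n. exists (y n). pose proof (x_grows n). pose proof (x_lt_y n). split; auto; lia.
  - intros f Hf. destruct (Hen f) as [e <-]. exists (x e). split; auto. apply Hdom, Hf.
Qed.
End Separation.

Lemma adj_swap_in_G_B (i : nat) : G_B (adj_swap i).
Proof.
  destruct prf_enumeration as [en Hen].
  destruct (diagonal_sequences (fun e => dom (en e)) (S (S i)))
    as [x [y [Hx0 [Hxy [Hyx Hdiag]]]]].
  set (X := fun z => exists e, x e = z).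
  assert (Hgap : gapped x) by (intros e; pose proof (Hxy e); pose proof (Hyx e); lia).
  assert (Hbig : forall z, X z -> S (S i) <= z).
  { intros z [e <-]. pose proof (x_grows x y Hxy Hyx e). lia. }
  assert (HX : G_B (pair_swap X)).
  { apply ig_base. exists X. split.
    - apply (bi_immune_separating x y Hxy Hyx en); [exact Hen|exact Hdiag| |].
      + intros e. exists e. reflexivity.
      + intros e [e' He']. exact (y_not_x x y Hxy Hyx e e' (eq_sym He')).
    - apply sigma_gapped with x; unfold X; tauto. }
  assert (HXi : G_B (pair_swap (fun z => X z \/ z = i))).
  { apply ig_base. exists (fun z => X z \/ z = i). split.
    - apply (bi_immune_separating x y Hxy Hyx en); [exact Hen|exact Hdiag| |].
      + intros e. left. exists e. reflexivity.
      + intros e [[e' He']|He].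
        * exact (y_not_x x y Hxy Hyx e e' (eq_sym He')).
        * pose proof (x_grows x y Hxy Hyx e). pose proof (Hxy e). lia.
    - apply sigma_gapped with (fun n => match n with 0 => i | S n => x n end).
      + intros [|n]; [lia|apply Hgap].
      + intros z. unfold X. split.
        * intros [[e <-]| ->]; [exists (S e)|exists 0]; auto.
        * intros [[|n] <-]; eauto. }
  (* s_i = sigma_X o sigma_(X + {i}) *)
  apply ig_ext with (fun z => pair_swap X (pair_swap (fun w => X w \/ w = i) z)).
  - apply ig_comp; [exact HXi|exact HX].
  - intros z. rewrite pair_swap_add.
    + apply pair_swap_involutive, (x_sparse x y Hxy Hyx).
    + intros w Hw. right. apply Hbig in Hw. lia.
Qed.

Lemma transp_conj (i m z : nat) :
  i < m -> transp i (S m) z = adj_swap m (transp i m (adj_swap m z)).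
Proof.
  intros Him. unfold adj_swap, transp.
  repeat (cbv beta iota; match goal with |- context [?a =? ?b] =>
    lazymatch a with context [if _ then _ else _] => fail | _ =>
    lazymatch b with context [if _ then _ else _] => fail | _ =>
    destruct (Nat.eqb_spec a b) end end end);
  lia.
Qed.

Theorem lemma2p4 : forall i j : nat, i < j -> G_B (transp i j).
Proof.
  intros i j Hij. induction Hij as [|m Him IH].
  - apply ig_ext with (adj_swap i); [apply adj_swap_in_G_B|].
    intros z. unfold adj_swap, transp.
    destruct (Nat.eqb_spec z i); destruct (Nat.eqb_spec z (S i)); auto.
  - apply ig_ext with (fun z => adj_swap m (transp i m (adj_swap m z))).
    + apply ig_comp; [|apply adj_swap_in_G_B].
      apply ig_comp; [apply adj_swap_in_G_B|exact IH].
    + intros z. symmetry. apply transp_conj. lia.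
Qed.
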